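(* Assume the linear band crossing and Band Crossing Scenario described in the context, with limit point $(q^*,p^* )$ at time $t^*$. (i) For sufficiently small $\delta'>0$, the system $$\dot q_-=\partial_pE_-(p_-),\quad \dot p_-=-\partial_qW(q_-),\quad q_-(t^* )=q^*,\ p_-(t^* )=p^*$$ has a unique smooth solution $(q_-(t),p_-(t))\in\mathbb R\times U$ on $[t^*-\delta',t^*+\delta']$. (ii) For sufficiently small $T'\ge t^*+\delta'$, there exists a solution $(q_n(t),p_n(t))\in\mathbb R\times\mathcal B$ on $(t^*,T']$ of $$\dot q_n=\partial_pE_n(p_n),\quad \dot p_n=-\partial_qW(q_n)$$ with $\lim_{t\downarrow t^*}(q_n(t),p_n(t))=(q^*,p^* )$ and $G(E_n(p_n(t)))>0$ for all $t\in(t^*,T']$. It satisfies $(q_-(t),p_-(t))=(q_n(t),p_n(t))$ for all $t\in(t^*,t^*+\delta']$. (iii) Consequently, the map $t\mapsto(\mathfrak q_-(t),\mathfrak p_-(t))$ is smooth on $[t^*-\delta',T']$. This map is defined as $(q_-(t),p_-(t))$ on $[t^*-\delta',t^*+\delta']$ and as $(q_n(t),p_n(t))$ on $[t^*+\delta',T']$.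
   Context: **Potentials.** Let $V:\mathbb R\to\mathbb R$ be smooth and $1$-periodic, and let $W:\mathbb R\to\mathbb R$ be smooth with all derivatives bounded. **Bloch bands.** For $p\in\mathbb R$, $H(p):=\frac12(p-i\partial_z)^2+V(z)$ acts on $1$-periodic functions. Its eigenvalues, ordered with multiplicity, are $E_1(p)\le E_2(p)\le\cdots$, with normalized eigenfunctions $\chi_m(z;p)$. The Brillouin zone is $\mathcal B=[0,2\pi]$, and $G(E_m(p)):=\min_{m'\ne m}|E_m(p)-E_{m'}(p)|$. **Linear band crossing.** $U\subset\mathcal B$ is open with $p^*\in U$, and: - (A1) $E_n(p^* )=E_{n+1}(p^* )$, with no other degeneracy of $E_n,E_{n+1}$ in $U$. - (A2) There is $M>0$ with $|E_m-E_{n+1}|,|E_n-E_m|\ge M$ on $\overline U$ for all $m\notin\{n,n+1\}$. - (A3) The maps $(E_+,\chi_+):=(E_n,\chi_n)$ for $p<p^*$ and $(E_{n+1},\chi_{n+1})$ for $p\ge p^*$, and $(E_-,\chi_-):=(E_{n+1},\chi_{n+1})$ for $p<p^*$ and $(E_n,\chi_n)$ for $p\ge p^*$, are smooth on $U$. - (A4) $\partial_pE_+(p^* )>0>\partial_pE_-(p^* )$. **Band Crossing Scenario.** $(q_0,p_0)$ satisfies $G(E_n(p_0))>0$. The system $\dot q=\partial_pE_n(p)$, $\dot p=-\partial_qW(q)$, $(q,p)(0)=(q_0,p_0)$ has a unique smooth solution on $[0,t^* )$ (with $t^*>0$), along which $G(E_n(p(t)))>0$. Moreover $p(t)\to p^*$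 as $t\uparrow t^*$, $q^*:=\lim_{t\uparrow t^*}q(t)$, and $-\partial_qW(q^* )>0$. *)

From Stdlib Require Import Reals.
From Coquelicot Require Import Coquelicot.
Open Scope R_scope.

Definition Smooth (f : R -> R) : Prop := forall (k : nat) (x : R), ex_derive_n f k x.

Definition Periodic1 (f : R -> R) : Prop := forall x, f (x + 1) = f x.

Definition DerivWithin (I : R -> Prop) (f : R -> R) (t l : R) : Prop :=
  filterlim (fun h => (f (t + h) - f t) / h)
    (within (fun h => h <> 0 /\ I (t + h)) (locally 0)) (locally l).

Definition SmoothOn (I : R -> Prop) (f : R -> R) : Prop :=
  exists D : nat -> R -> R,
    (forall t, I t -> D O t = f t) /\
    (forall k t, I t -> DerivWithin I (D k) t (D (S k) t)).

Definition SolvesOn (W h : R -> R) (I : R -> Prop) (q p : R -> R) : Prop :=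
  forall t, I t ->
    DerivWithin I q t (Derive h (p t)) /\ DerivWithin I p t (- Derive W (q t)).

Fixpoint fsum (k : nat) (f : nat -> R) : R :=
  match k with O => 0 | S k' => fsum k' f + f k' end.

(** A 1-periodic function u = a + i b (real and imaginary parts a, b) is a
    (smooth) eigenfunction of H(p) = 1/2 (p - i d/dz)^2 + V with eigenvalue lam:
    (p - i d/dz)^2 u = p^2 u - 2 i p u' - u''. *)
Definition BlochEigenfunction (V : R -> R) (p lam : R) (a b : R -> R) : Prop :=
  Smooth a /\ Smooth b /\ Periodic1 a /\ Periodic1 b /\
  (exists z, a z <> 0 \/ b z <> 0) /\
  forall z,
    / 2 * (p ^ 2 * a z + 2 * p * Derive b z - Derive_n a 2 z) + V z * a z = lam * a z /\
    / 2 * (p ^ 2 * b z - 2 * p * Derive a z - Derive_n b 2 z) + V z * b z = lam * b z.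

(** Complex-linear independence of the k functions u_j = a j + i b j. *)
Definition CIndependent (k : nat) (a b : nat -> R -> R) : Prop :=
  forall x y : nat -> R,
    (forall z, fsum k (fun j => x j * a j z - y j * b j z) = 0 /\
               fsum k (fun j => x j * b j z + y j * a j z) = 0) ->
    forall j, (j < k)%nat -> x j = 0 /\ y j = 0.

(** m-th Bloch band E_m(p) (m >= 1): the m-th eigenvalue of H(p), ordered
    increasingly and counted with multiplicity, i.e. the least lam such that
    H(p) has m linearly independent eigenfunctions with eigenvalues <= lam. *)
Definition BlochBand (V : R -> R) (m : nat) (p : R) : R :=
  real (Glb_Rbar (fun lam =>
    exists a b : nat -> R -> R,
      CIndependent m a b /\
      forall j, (j < m)%nat ->
        exists lj, lj <= lam /\ BlochEigenfunction V p lj (a j) (b j))).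

(** Gap G(E_m(p)) = min_{m' <> m} |E_m(p) - E_m'(p)|  (bands indexed from 1). *)
Definition BandGap (V : R -> R) (m : nat) (p : R) : R :=
  real (Glb_Rbar (fun x => exists m', (1 <= m')%nat /\ m' <> m /\
                     x = Rabs (BlochBand V m p - BlochBand V m' p))).

Definition Normalized (a b : R -> R) : Prop :=
  RInt (fun z => a z ^ 2 + b z ^ 2) 0 1 = 1.

Definition closureR (U : R -> Prop) (x : R) : Prop :=
  forall eps, 0 < eps -> exists u, U u /\ Rabs (x - u) < eps.

Definition BandEplus (V : R -> R) (n : nat) (pstar p : R) : R :=
  if Rlt_dec p pstar then BlochBand V n p else BlochBand V (S n) p.
Definition BandEminus (V : R -> R) (n : nat) (pstar p : R) : R :=
  if Rlt_dec p pstar then BlochBand V (S n) p else BlochBand V n p.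

Definition Icc (a b : R) (t : R) : Prop := a <= t <= b.
Definition Ico (a b : R) (t : R) : Prop := a <= t < b.
Definition Ioc (a b : R) (t : R) : Prop := a < t <= b.

From Stdlib Require Import Reals Lra Ranalysis5.
From Coquelicot Require Import Coquelicot.
Open Scope R_scope.

(* Near (qstar, pstar) the system q' = E_-'(p), p' = -W'(q) is solved explicitly. Since
   W'(qstar) < 0, conservation of E_-(p) + W(q) expresses q as a function of p, and the
   remaining scalar equation p' = -W'(q(p)) > 0 is solved by separation of variables.
   Lipschitz estimates give uniqueness on short intervals, and differentiating the equations
   repeatedly gives smoothness. Since p' > 0, for t > tstar the solution has p > pstar, where
   E_- coincides with E_n; so the same curve solves the E_n system there, with a positive gap
   by (A1)-(A2). *)

Lemma DerivWithin_eps I f t l : DerivWithin I f t l <->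
  forall eps, 0 < eps -> exists del, 0 < del /\
    forall h, h <> 0 -> I (t + h) -> Rabs h < del -> Rabs ((f (t + h) - f t) / h - l) < eps.
Proof.
  unfold DerivWithin; rewrite filterlim_locally; split.
  - intros H eps Heps. destruct (H (mkposreal eps Heps)) as [del Hdel].
    exists del; split; [apply cond_pos|]. intros h Hh0 HI Hh.
    apply (Hdel h); [|now split]. change (Rabs (h - 0) < del). now rewrite Rminus_0_r.
  - intros H eps. destruct (H eps (cond_pos eps)) as [del [Hdel H']].
    exists (mkposreal del Hdel). intros h Hh [Hh0 HI]. apply H'; auto.
    change (Rabs (h - 0) < del) in Hh. now rewrite Rminus_0_r in Hh.
Qed.

Lemma is_derive_DerivWithin I f t l : is_derive f t l -> DerivWithin I f t l.
Proof.
  intros H. apply is_derive_Reals in H. apply DerivWithin_eps. intros eps Heps.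
  destruct (H eps Heps) as [del Hdel]. exists del; split; [apply cond_pos|].
  intros h Hh0 _ Hh. now apply Hdel.
Qed.

Lemma DerivWithin_is_derive (I : R -> Prop) f t l e : 0 < e ->
  (forall s, Rabs (s - t) < e -> I s) -> DerivWithin I f t l -> is_derive f t l.
Proof.
  intros He HI H. apply is_derive_Reals. intros eps Heps.
  destruct (proj1 (DerivWithin_eps I f t l) H eps Heps) as [del [Hdel H']].
  assert (Hm : 0 < Rmin del e) by now apply Rmin_pos.
  exists (mkposreal _ Hm). intros h Hh0 Hh. simpl in Hh.
  pose proof (Rmin_l del e). pose proof (Rmin_r del e).
  apply H'; [exact Hh0| |lra]. apply HI. replace (t + h - t) with h by ring. lra.
Qed.

Lemma is_derive_continuity_pt f x l : is_derive f x l -> continuity_pt f x.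
Proof.
  intros H. apply continuity_pt_filterlim, (ex_derive_continuous f x). now exists l.
Qed.

Lemma DerivWithin_continuous_within I f t l : DerivWithin I f t l ->
  forall eps, 0 < eps -> exists del, 0 < del /\
    forall s, I s -> Rabs (s - t) < del -> Rabs (f s - f t) < eps.
Proof.
  intros H eps Heps.
  destruct (proj1 (DerivWithin_eps I f t l) H 1 Rlt_0_1) as [del [Hdel H']].
  set (e := Rmin del (eps / (Rabs l + 1))).
  assert (Hl : 0 < Rabs l + 1) by (pose proof (Rabs_pos l); lra).
  assert (He : 0 < e) by (apply Rmin_pos; [|apply Rdiv_lt_0_compat]; lra).
  exists e; split; [exact He|]. intros s Is Hs.
  destruct (Req_dec s t) as [->|Hst]; [rewrite Rminus_eq_0, Rabs_R0; lra|].
  assert (e <= del /\ e <= eps / (Rabs l + 1)) by (split; [apply Rmin_l|apply Rmin_r]).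
  specialize (H' (s - t)). replace (t + (s - t)) with s in H' by ring.
  assert (Hq : Rabs ((f s - f t) / (s - t)) < Rabs l + 1).
  { pose proof (Rabs_triang_inv ((f s - f t) / (s - t)) l).
    enough (Rabs ((f s - f t) / (s - t) - l) < 1) by lra.
    apply H'; auto; lra. }
  replace (f s - f t) with ((s - t) * ((f s - f t) / (s - t))) by (field; lra).
  rewrite Rabs_mult.
  apply Rle_lt_trans with (Rabs (s - t) * (Rabs l + 1)).
  { apply Rmult_le_compat_l; [apply Rabs_pos|lra]. }
  apply Rlt_le_trans with (eps / (Rabs l + 1) * (Rabs l + 1)).
  { apply Rmult_lt_compat_r; lra. }
  right; field; lra.
Qed.

Lemma DerivWithin_filterlim I f t l : DerivWithin I f t l ->
  filterlim (fun h => f (t + h)) (within (fun h => h <> 0 /\ I (t + h)) (locally 0))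
    (locally (f t)).
Proof.
  intros H. apply filterlim_locally. intros eps.
  destruct (DerivWithin_continuous_within I f t l H eps (cond_pos eps)) as [del [Hdel C]].
  exists (mkposreal del Hdel). intros h Hh [_ Ih]. apply C; [exact Ih|].
  change (Rabs (h - 0) < del) in Hh. now replace (t + h - t) with (h - 0) by ring.
Qed.

Lemma DerivWithin_plus I f g t a b : DerivWithin I f t a -> DerivWithin I g t b ->
  DerivWithin I (fun s => f s + g s) t (a + b).
Proof.
  intros Hf Hg. unfold DerivWithin.
  apply filterlim_within_ext with (f := fun h => (f (t + h) - f t) / h + (g (t + h) - g t) / h).
  { intros h [h0 _]. field; auto. }
  eapply filterlim_comp_2; [exact Hf|exact Hg|apply (filterlim_plus a b)].
Qed.

Lemma DerivWithin_opp I f t a : DerivWithin I f t a -> DerivWithin I (fun s => - f s) t (- a).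
Proof.
  intros Hf. unfold DerivWithin.
  apply filterlim_within_ext with (f := fun h => - ((f (t + h) - f t) / h)).
  { intros h [h0 _]. field; auto. }
  eapply filterlim_comp; [exact Hf|apply (filterlim_opp a)].
Qed.

Lemma DerivWithin_mult I f g t a b : DerivWithin I f t a -> DerivWithin I g t b ->
  DerivWithin I (fun s => f s * g s) t (a * g t + f t * b).
Proof.
  intros Hf Hg. unfold DerivWithin.
  apply filterlim_within_ext
    with (f := fun h => (f (t + h) - f t) / h * g (t + h) + f t * ((g (t + h) - g t) / h)).
  { intros h [h0 _]. field; auto. }
  eapply filterlim_comp_2; [| |apply (filterlim_plus (a * g t) (f t * b))].
  - eapply filterlim_comp_2; [exact Hf|exact (DerivWithin_filterlim I g t b Hg)|].
    apply (filterlim_mult a (g t)).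
  - eapply filterlim_comp_2; [apply filterlim_const|exact Hg|apply (filterlim_mult (f t) b)].
Qed.

Lemma DerivWithin_comp I u h t a b : DerivWithin I u t a -> is_derive h (u t) b ->
  DerivWithin I (fun s => h (u s)) t (b * a).
Proof.
  intros Hu Hh. set (y0 := u t) in Hh |- *.
  (* Caratheodory's form of differentiability: [h y - h y0 = slope y * (y - y0)]
     with [slope] continuous at [y0]. *)
  set (slope := fun y => if Req_EM_T y y0 then b else (h y - h y0) / (y - y0)).
  assert (Hslope : filterlim slope (locally y0) (locally b)).
  { apply is_derive_Reals in Hh. apply filterlim_locally. intros eps.
    destruct (Hh eps (cond_pos eps)) as [del Hdel]. exists del. intros y Hy. change R in y.
    change (Rabs (slope y - b) < eps). unfold slope. destruct (Req_EM_T y y0) as [E|E].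
    - rewrite Rminus_eq_0, Rabs_R0. apply cond_pos.
    - change (Rabs (y - y0) < del) in Hy. specialize (Hdel (y - y0) ltac:(lra) Hy).
      now replace (y0 + (y - y0)) with y in Hdel by ring. }
  unfold DerivWithin.
  apply filterlim_within_ext with (f := fun s => slope (u (t + s)) * ((u (t + s) - u t) / s)).
  { intros s [s0 _]. unfold slope. fold y0. destruct (Req_EM_T (u (t + s)) y0) as [E|E].
    - rewrite E. unfold Rdiv. ring.
    - field. split; auto. lra. }
  eapply filterlim_comp_2; [| exact Hu | apply (filterlim_mult b a)].
  eapply filterlim_comp; [exact (DerivWithin_filterlim I u t a Hu)|exact Hslope].
Qed.

(* Clamping [f] to [a, b] makes it continuous on the whole of [a, b], so the usual MVT applies. *)
Lemma DerivWithin_Icc_lipschitz a b f l M :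
  (forall t, Icc a b t -> DerivWithin (Icc a b) f t (l t)) ->
  (forall t, Icc a b t -> Rabs (l t) <= M) ->
  forall x y, Icc a b x -> Icc a b y -> Rabs (f y - f x) <= M * Rabs (y - x).
Proof.
  intros Hf HM x y Ix Iy.
  set (g := fun z => f (Rmax a (Rmin b z))).
  assert (Hg : forall z, Icc a b z -> g z = f z).
  { intros z [Hz1 Hz2]. unfold g. f_equal. rewrite Rmin_right, Rmax_right; lra. }
  assert (Hsub : forall z, Rmin x y <= z <= Rmax x y -> Icc a b z).
  { intros z Hz. destruct Ix, Iy. unfold Icc, Rmin, Rmax in *. destruct Rle_dec; lra. }
  destruct (MVT_gen g x y l) as [c [Hc Hfc]].
  - intros z Hz. assert (Iz : Icc a b z) by (apply Hsub; lra).
    assert (Hin : forall s, Rabs (s - z) < Rmin (z - a) (b - z) -> Icc a b s).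
    { intros s Hs. pose proof (Rmin_l (z - a) (b - z)). pose proof (Rmin_r (z - a) (b - z)).
      unfold Icc. split_Rabs; lra. }
    assert (Hza : a < z < b).
    { unfold Rmin, Rmax in Hz. destruct Ix, Iy. destruct Rle_dec; lra. }
    apply (is_derive_ext_loc f).
    + exists (mkposreal (Rmin (z - a) (b - z)) ltac:(apply Rmin_pos; lra)).
      intros s Hs. symmetry. apply Hg, Hin, Hs.
    + apply (DerivWithin_is_derive (Icc a b) f z (l z) (Rmin (z - a) (b - z)));
        [apply Rmin_pos; lra|exact Hin|apply Hf, Iz].
  - intros z Hz. apply continuity_pt_filterlim, filterlim_locally. intros eps.
    assert (Iz : Icc a b z) by (apply Hsub, Hz).
    destruct (DerivWithin_continuous_within _ _ _ _ (Hf z Iz) eps (cond_pos eps))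
      as [del [Hdel C]].
    exists (mkposreal del Hdel). intros s Hs. change (Rabs (g s - g z) < eps).
    rewrite (Hg z Iz). unfold g. destruct Iz.
    apply C; [unfold Icc, Rmax, Rmin; repeat destruct Rle_dec; lra|].
    change (Rabs (s - z) < del) in Hs. unfold Rmax, Rmin. repeat destruct Rle_dec; split_Rabs; lra.
  - rewrite <- (Hg x Ix), <- (Hg y Iy), Hfc, Rabs_mult.
    apply Rmult_le_compat_r; [apply Rabs_pos|apply HM, Hsub, Hc].
Qed.

Lemma is_derive_Icc_lipschitz a b f df M :
  (forall x, Icc a b x -> is_derive f x (df x)) -> (forall x, Icc a b x -> Rabs (df x) <= M) ->
  forall x y, Icc a b x -> Icc a b y -> Rabs (f y - f x) <= M * Rabs (y - x).
Proof.
  intros Hf. apply DerivWithin_Icc_lipschitz. intros t It. now apply is_derive_DerivWithin, Hf.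
Qed.

Lemma DerivWithin_Icc_bound a b ts f l M : Icc a b ts ->
  (forall t, Icc a b t -> DerivWithin (Icc a b) f t (l t)) ->
  (forall t, Icc a b t -> Rabs (l t) <= M) ->
  forall t, Icc a b t -> Rabs (f t - f ts) <= M * (b - a).
Proof.
  intros Its Hf HM t It.
  assert (HM0 : 0 <= M) by (eapply Rle_trans; [apply Rabs_pos|apply (HM ts Its)]).
  eapply Rle_trans; [apply (DerivWithin_Icc_lipschitz a b f l M Hf HM ts t Its It)|].
  apply Rmult_le_compat_l; [exact HM0|]. destruct Its, It. split_Rabs; lra.
Qed.

Lemma lipschitz_of_bounded_derive f df M :
  (forall x, is_derive f x (df x)) -> (forall x, Rabs (df x) <= M) ->
  forall x y, Rabs (f x - f y) <= M * Rabs (x - y).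
Proof.
  intros Hf HM x y.
  apply (is_derive_Icc_lipschitz (Rmin x y) (Rmax x y) f df M); [auto|auto| |];
    unfold Icc, Rmin, Rmax; destruct Rle_dec; lra.
Qed.

Lemma is_derive_comp_R (f g : R -> R) x df dg :
  is_derive f (g x) df -> is_derive g x dg -> is_derive (fun y => f (g y)) x (df * dg).
Proof. intros Hf Hg. rewrite Rmult_comm. exact (is_derive_comp f g x df dg Hf Hg). Qed.

Lemma strict_incr_of_derive_pos f df a b :
  (forall x, a <= x <= b -> is_derive f x (df x) /\ 0 < df x) ->
  forall x y, a <= x -> x < y -> y <= b -> f x < f y.
Proof.
  intros Hf x y Hx Hxy Hy.
  destruct (MVT_gen f x y df) as [c [Hc Hfc]].
  - intros z Hz. rewrite Rmin_left, Rmax_right in Hz by lra. apply Hf; lra.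
  - intros z Hz. rewrite Rmin_left, Rmax_right in Hz by lra.
    apply (is_derive_continuity_pt f z (df z)), Hf; lra.
  - rewrite Rmin_left, Rmax_right in Hc by lra.
    assert (0 < df c * (y - x)) by (apply Rmult_lt_0_compat; [apply Hf|]; lra). lra.
Qed.

Lemma increasing_inverse f a b : a < b ->
  (forall x, a <= x <= b -> continuity_pt f x) ->
  (forall x y, a <= x -> x < y -> y <= b -> f x < f y) ->
  exists g : R -> R, (forall x, a <= x <= b -> g (f x) = x) /\
    forall y, f a <= y <= f b -> a <= g y <= b /\ f (g y) = y.
Proof.
  intros Hab Hcont Hincr.
  assert (Hpre : forall y, {x | f a <= y <= f b -> a <= x <= b /\ f x = y}).
  { intros y. destruct (Rle_dec (f a) y) as [H1|H1]; [destruct (Rle_dec y (f b)) as [H2|H2]|].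
    - destruct (f_interv_is_interv f a b y Hab (conj H1 H2) Hcont) as [x Hx]. now exists x.
    - exists a. lra.
    - exists a. lra. }
  set (g := fun y => proj1_sig (Hpre y)).
  assert (Hg : forall y, f a <= y <= f b -> a <= g y <= b /\ f (g y) = y)
    by (intros y; exact (proj2_sig (Hpre y))).
  exists g. split; [|exact Hg]. intros x Hx.
  assert (Hfx : f a <= f x <= f b).
  { split; [destruct (Req_dec a x) as [->|]|destruct (Req_dec x b) as [->|]];
      try lra; left; apply Hincr; lra. }
  destruct (Hg (f x) Hfx) as [Hgx Efx].
  destruct (Rtotal_order (g (f x)) x) as [Hlt|[Heq|Hlt]]; [|exact Heq|].
  - pose proof (Hincr (g (f x)) x ltac:(lra) Hlt ltac:(lra)). lra.
  - pose proof (Hincr x (g (f x)) ltac:(lra) Hlt ltac:(lra)). lra.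
Qed.

Lemma inverse_of_derive_pos f df a b : a < b ->
  (forall x, a <= x <= b -> is_derive f x (df x) /\ 0 < df x) ->
  exists g : R -> R, (forall x, a <= x <= b -> g (f x) = x) /\
    forall y, f a < y < f b -> a < g y < b /\ f (g y) = y /\ is_derive g y (/ df (g y)).
Proof.
  intros Hab Hf.
  pose proof (strict_incr_of_derive_pos f df a b Hf) as Hincr.
  assert (Hcont : forall x, a <= x <= b -> continuity_pt f x).
  { intros x Hx. apply (is_derive_continuity_pt f x (df x)), Hf, Hx. }
  destruct (increasing_inverse f a b Hab Hcont Hincr) as [g [Hgf Hg]].
  exists g. split; [exact Hgf|]. intros y Hy.
  destruct (Hg y ltac:(lra)) as [Hgy Efy].
  assert (Hgy' : a < g y < b).
  { assert (a <> g y) by (intros E; rewrite <- E in Efy; lra).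
    assert (g y <> b) by (intros E; rewrite E in Efy; lra).
    lra. }
  split; [exact Hgy'|split; [exact Efy|]].
  assert (Prf : forall z, g (f a) <= z <= g (f b) -> derivable_pt f z).
  { intros z Hz. rewrite !Hgf in Hz by lra. exists (df z). apply is_derive_Reals, Hf, Hz. }
  assert (Prg_incr : g (f a) <= g y <= g (f b)) by (rewrite !Hgf; lra).
  assert (Hgc : continuity_pt g y).
  { apply (continuity_pt_recip_interv f g a b Hab Hincr); [| |exact Hcont|exact Hy].
    - intros z H1 H2. unfold comp, id. apply Hg; lra.
    - intros z H1 H2. apply Hg; lra. }
  pose proof (derivable_pt_lim_recip_interv f g (f a) (f b) y Prf Hgc
                ltac:(apply Hincr; lra) Hy Prg_incr) as Hd.
  assert (Edf : derive_pt f (g y) (Prf (g y) Prg_incr) = df (g y)).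
  { apply derive_pt_eq_0, is_derive_Reals, Hf. lra. }
  rewrite Edf in Hd. apply is_derive_Reals.
  replace (/ df (g y)) with (1 / df (g y)) by (field; apply Rgt_not_eq, Hf; lra).
  apply Hd; [intros z Hz; unfold comp, id; apply Hg; lra|apply Rgt_not_eq, Hf; lra].
Qed.

Lemma is_derive_RInt_ball (g : R -> R) c r s :
  (forall z, Rabs (z - c) < r -> continuity_pt g z) -> Rabs (s - c) < r ->
  is_derive (fun x => RInt g c x) s (g s).
Proof.
  intros Hg Hs. apply (is_derive_RInt g (fun x => RInt g c x) c s).
  - exists (mkposreal (r - Rabs (s - c)) ltac:(lra)). intros b Hb.
    change (Rabs (b - s) < r - Rabs (s - c)) in Hb.
    apply (@RInt_correct R_CompleteNormedModule), ex_RInt_continuous. intros z Hz.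
    apply continuity_pt_filterlim, Hg.
    unfold Rmin, Rmax in Hz. destruct Rle_dec; split_Rabs; lra.
  - apply continuity_pt_filterlim, Hg, Hs.
Qed.

(* Separation of variables: [P] inverts [T s = \int_ps^s 1 / F]. *)
Lemma autonomous_local_solution (F : R -> R) ts ps r : 0 < r ->
  (forall s, Rabs (s - ps) < r -> continuity_pt F s /\ 0 < F s) ->
  exists d P, 0 < d /\ P ts = ps /\ forall t, Rabs (t - ts) < d ->
    is_derive P t (F (P t)) /\ Rabs (P t - ps) < r /\ (ts < t -> ps < P t).
Proof.
  intros Hr HF.
  set (T := fun s => RInt (fun z => / F z) ps s).
  assert (HT : forall s, ps - r / 2 <= s <= ps + r / 2 -> is_derive T s (/ F s) /\ 0 < / F s).
  { intros s Hs. split; [|apply Rinv_0_lt_compat, HF; split_Rabs; lra].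
    apply (is_derive_RInt_ball (fun z => / F z) ps r); [|split_Rabs; lra].
    intros z Hz. apply continuity_pt_inv; [|apply Rgt_not_eq]; apply HF, Hz. }
  assert (HT0 : T ps = 0) by apply (@RInt_point R_CompleteNormedModule).
  pose proof (strict_incr_of_derive_pos T _ _ _ HT) as Tincr.
  destruct (inverse_of_derive_pos T (fun s => / F s) (ps - r / 2) (ps + r / 2))
    as [Th [HThT HTTh]]; [lra|exact HT|].
  assert (Hlo : T (ps - r / 2) < 0) by (rewrite <- HT0; apply Tincr; lra).
  assert (Hhi : 0 < T (ps + r / 2)) by (rewrite <- HT0; apply Tincr; lra).
  exists (Rmin (- T (ps - r / 2)) (T (ps + r / 2))), (fun t => Th (t - ts)).
  split; [apply Rmin_pos; lra|]. split.
  { rewrite Rminus_eq_0, <- HT0. apply HThT. lra. }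
  intros t Ht.
  assert (Htau : T (ps - r / 2) < t - ts < T (ps + r / 2)).
  { pose proof (Rmin_l (- T (ps - r / 2)) (T (ps + r / 2))).
    pose proof (Rmin_r (- T (ps - r / 2)) (T (ps + r / 2))). split_Rabs; lra. }
  destruct (HTTh (t - ts) Htau) as [HTh [ETh DTh]].
  split; [|split; [split_Rabs; lra|]].
  - replace (F (Th (t - ts))) with (/ / F (Th (t - ts)) * 1) by (rewrite Rinv_inv; ring).
    apply (is_derive_comp_R Th (fun t => t - ts)); [exact DTh|].
    auto_derive; auto; ring.
  - intros Hts. destruct (Rle_lt_dec (Th (t - ts)) ps) as [Hle|Hlt]; [|exact Hlt].
    destruct Hle as [Hlt|Heq].
    + pose proof (Tincr (Th (t - ts)) ps ltac:(lra) Hlt ltac:(lra)). lra.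
    + rewrite Heq in ETh. lra.
Qed.

Lemma continuity_pt_neg_near f x : continuity_pt f x -> f x < 0 ->
  exists a, 0 < a /\ forall y, x - a <= y <= x + a -> f y < 0.
Proof.
  intros Hf Hx. assert (Hhalf : 0 < - f x / 2) by lra.
  destruct (proj1 (filterlim_locally f (f x)) (proj1 (continuity_pt_filterlim f x) Hf)
              (mkposreal _ Hhalf)) as [e He].
  pose proof (cond_pos e). exists (e / 2). split; [lra|]. intros y Hy.
  assert (Hb : ball x e y) by (change (Rabs (y - x) < e); split_Rabs; lra).
  specialize (He y Hb). change (Rabs (f y - f x) < - f x / 2) in He. split_Rabs; lra.
Qed.

(* [Q s] is the [q] near [qs] with [E s + W q = E ps + W qs]; it exists because [- W]
   increases near [qs]. *)
Lemma energy_level_curve (E f W w : R -> R) ps qs r0 : 0 < r0 ->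
  (forall x, Rabs (x - ps) < r0 -> is_derive E x (f x)) ->
  (forall x, is_derive W x (w x)) -> (forall x, continuity_pt w x) -> w qs < 0 ->
  exists r Q, 0 < r <= r0 /\ Q ps = qs /\ forall s, Rabs (s - ps) < r ->
    w (Q s) < 0 /\ is_derive Q s (f s / - w (Q s)).
Proof.
  intros Hr0 HE HW Hwc Hwqs.
  destruct (continuity_pt_neg_near w qs (Hwc qs) Hwqs) as [a [Ha0 Hneg]].
  assert (Hphi : forall x, qs - a <= x <= qs + a ->
                  is_derive (fun x => - W x) x (- w x) /\ 0 < - w x).
  { intros x Hx. split; [apply (is_derive_opp W), HW|specialize (Hneg x Hx); lra]. }
  pose proof (strict_incr_of_derive_pos (fun x => - W x) (fun x => - w x) _ _ Hphi) as Hincr.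
  cbv beta in Hincr.
  destruct (inverse_of_derive_pos (fun x => - W x) (fun x => - w x) (qs - a) (qs + a))
    as [psi [Hpsi1 Hpsi2]]; [lra|exact Hphi|].
  set (gap := Rmin (- W qs - - W (qs - a)) (- W (qs + a) - - W qs)).
  assert (Hgap : 0 < gap) by (apply Rmin_pos; apply Rlt_0_minus, Hincr; lra).
  assert (HEc : continuity_pt E ps).
  { apply (is_derive_continuity_pt E ps (f ps)), HE. rewrite Rminus_eq_0, Rabs_R0. exact Hr0. }
  destruct (proj1 (filterlim_locally E (E ps)) (proj1 (continuity_pt_filterlim E ps) HEc)
              (mkposreal gap Hgap)) as [r Hr].
  set (c := E ps + W qs).
  exists (Rmin r r0), (fun s => psi (E s - c)).
  split; [split; [apply Rmin_pos; [apply cond_pos|lra]|apply Rmin_r]|].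
  split; [replace (E ps - c) with (- W qs) by (unfold c; ring); apply Hpsi1; lra|].
  intros s Hs. pose proof (Rmin_l r r0). pose proof (Rmin_r r r0).
  assert (Hlevel : - W (qs - a) < E s - c < - W (qs + a)).
  { assert (Hb : ball ps r s) by (change (Rabs (s - ps) < r); lra).
    specialize (Hr s Hb). change (Rabs (E s - E ps) < gap) in Hr.
    assert (gap <= - W qs - - W (qs - a) /\ gap <= - W (qs + a) - - W qs)
      by (split; [apply Rmin_l|apply Rmin_r]).
    unfold c. split_Rabs; lra. }
  destruct (Hpsi2 _ Hlevel) as [Hpsi_in [_ Hpsi_d]].
  split; [apply Hneg; lra|].
  replace (f s / - w (psi (E s - c))) with (/ - w (psi (E s - c)) * f s) by (unfold Rdiv; ring).
  apply (is_derive_comp_R psi (fun s => E s - c)); [exact Hpsi_d|].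
  replace (f s) with (f s - 0) by ring.
  apply (is_derive_minus E (fun _ => c)); [apply HE; lra|exact (is_derive_const c s)].
Qed.

Lemma hamiltonian_local_solution (E f W w : R -> R) ts ps qs r0 : 0 < r0 ->
  (forall x, Rabs (x - ps) < r0 -> is_derive E x (f x)) ->
  (forall x, is_derive W x (w x)) -> (forall x, continuity_pt w x) -> w qs < 0 ->
  exists d Q P, 0 < d /\ Q ts = qs /\ P ts = ps /\ forall t, Rabs (t - ts) < d ->
    is_derive Q t (f (P t)) /\ is_derive P t (- w (Q t)) /\
    Rabs (P t - ps) < r0 /\ (ts < t -> ps < P t).
Proof.
  intros Hr0 HE HW Hwc Hwqs.
  destruct (energy_level_curve E f W w ps qs r0) as (r & Q & [Hr Hrr0] & HQps & HQ); auto.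
  destruct (autonomous_local_solution (fun s => - w (Q s)) ts ps r)
    as (d & P & Hd & HPts & HP); auto.
  { intros s Hs. destruct (HQ s Hs) as [Hneg HQd]. split; [|lra].
    apply continuity_pt_opp, continuity_pt_comp; [|apply Hwc].
    exact (is_derive_continuity_pt _ _ _ HQd). }
  exists d, (fun t => Q (P t)), P. rewrite HPts. do 3 (split; [easy|]).
  intros t Ht. destruct (HP t Ht) as (HPd & HPr & HPgt).
  destruct (HQ (P t) HPr) as [Hneg HQd].
  split; [|split; [exact HPd|split; [lra|exact HPgt]]].
  replace (f (P t)) with (f (P t) / - w (Q (P t)) * - w (Q (P t))) by (field; lra).
  exact (is_derive_comp_R Q P t _ _ HQd HPd).
Qed.

(* The iterated derivatives of a solution of [q' = f p], [p' = g q] are polynomials in the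
   [f^(j) (p t)] and [g^(j) (q t)], a class closed under differentiation. *)
Inductive flow_poly :=
  | FQ | FP | FDf (j : nat) | FDg (j : nat)
  | FAdd (x y : flow_poly) | FMul (x y : flow_poly).

Fixpoint flow_poly_eval (Df Dg : nat -> R -> R) (q p : R -> R) (x : flow_poly) (t : R) : R :=
  match x with
  | FQ => q t
  | FP => p t
  | FDf j => Df j (p t)
  | FDg j => Dg j (q t)
  | FAdd x y => flow_poly_eval Df Dg q p x t + flow_poly_eval Df Dg q p y t
  | FMul x y => flow_poly_eval Df Dg q p x t * flow_poly_eval Df Dg q p y t
  end.

Fixpoint flow_poly_deriv (x : flow_poly) : flow_poly :=
  match x with
  | FQ => FDf 0
  | FP => FDg 0
  | FDf j => FMul (FDf (S j)) (FDg 0)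
  | FDg j => FMul (FDg (S j)) (FDf 0)
  | FAdd x y => FAdd (flow_poly_deriv x) (flow_poly_deriv y)
  | FMul x y => FAdd (FMul (flow_poly_deriv x) y) (FMul x (flow_poly_deriv y))
  end.

Section SmoothFlow.

Variables (I : R -> Prop) (Df Dg : nat -> R -> R) (q p : R -> R).
Hypothesis solves :
  forall t, I t -> DerivWithin I q t (Df 0%nat (p t)) /\ DerivWithin I p t (Dg 0%nat (q t)).
Hypothesis Df_derive : forall j t, I t -> is_derive (Df j) (p t) (Df (S j) (p t)).
Hypothesis Dg_derive : forall j t, I t -> is_derive (Dg j) (q t) (Dg (S j) (q t)).

Lemma DerivWithin_flow_poly_eval x t : I t ->
  DerivWithin I (flow_poly_eval Df Dg q p x) t (flow_poly_eval Df Dg q p (flow_poly_deriv x) t).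
Proof.
  induction x; intros It; simpl.
  - apply solves, It.
  - apply solves, It.
  - apply DerivWithin_comp; [apply solves|apply Df_derive]; exact It.
  - apply DerivWithin_comp; [apply solves|apply Dg_derive]; exact It.
  - apply DerivWithin_plus; auto.
  - apply DerivWithin_mult; auto.
Qed.

Lemma SmoothOn_flow : SmoothOn I q /\ SmoothOn I p.
Proof.
  split; [exists (fun k => flow_poly_eval Df Dg q p (Nat.iter k flow_poly_deriv FQ))
         |exists (fun k => flow_poly_eval Df Dg q p (Nat.iter k flow_poly_deriv FP))];
    split; try reflexivity; intros k t It; apply DerivWithin_flow_poly_eval, It.
Qed.

End SmoothFlow.

Lemma SmoothOn_ext I f g : (forall t, f t = g t) -> SmoothOn I f -> SmoothOn I g.
Proof.
  intros Efg [D [HD0 HD]]. exists D. split; [|exact HD]. intros t It. now rewrite HD0, Efg.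
Qed.

Lemma le_geometric_eq0 x B : 0 <= x -> (forall k, x <= B * (/ 2) ^ k) -> x = 0.
Proof.
  intros Hx HB. apply Rle_antisym; [|exact Hx].
  assert (Hlim : is_lim_seq (fun k => B * (/ 2) ^ k) 0).
  { replace (Finite 0) with (Rbar_mult B 0) by (simpl; f_equal; ring).
    apply is_lim_seq_scal_l, is_lim_seq_geom. rewrite Rabs_right; lra. }
  exact (is_lim_seq_le (fun _ => x) _ x 0 HB (is_lim_seq_const x) Hlim).
Qed.

Lemma SolvesOn_Icc_confined W h a b ts (q p : R -> R) C M r : Icc a b ts ->
  SolvesOn W h (Icc a b) q p -> (forall x, Rabs (Derive W x) <= C) -> C * (b - a) <= r ->
  (forall x, Icc (p ts - r) (p ts + r) x -> Rabs (Derive h x) <= M) ->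
  forall t, Icc a b t -> Icc (p ts - r) (p ts + r) (p t) /\ Rabs (q t - q ts) <= M * (b - a).
Proof.
  intros Its Hs HC HCr HM.
  assert (Hp : forall t, Icc a b t -> Icc (p ts - r) (p ts + r) (p t)).
  { intros t It.
    assert (Hb : Rabs (p t - p ts) <= C * (b - a)).
    { apply (DerivWithin_Icc_bound a b ts p (fun s => - Derive W (q s)) C Its); [| |exact It].
      - intros s Is. apply Hs, Is.
      - intros s _. rewrite Rabs_Ropp. apply HC. }
    unfold Icc. split_Rabs; lra. }
  intros t It. split; [apply Hp, It|].
  apply (DerivWithin_Icc_bound a b ts q (fun s => Derive h (p s)) M Its); [| |exact It].
  - intros s Is. apply Hs, Is.
  - intros s Is. apply HM, Hp, Is.
Qed.

Lemma Icc_difference_bound a b ts (u1 u2 d1 d2 : R -> R) K : Icc a b ts ->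
  (forall t, Icc a b t ->
     DerivWithin (Icc a b) u1 t (d1 t) /\ DerivWithin (Icc a b) u2 t (d2 t)) ->
  (forall t, Icc a b t -> Rabs (d1 t - d2 t) <= K) -> u1 ts = u2 ts ->
  forall t, Icc a b t -> Rabs (u1 t - u2 t) <= K * (b - a).
Proof.
  intros Its Hu HK Hts t It.
  assert (Hdiff : forall s, Icc a b s ->
            DerivWithin (Icc a b) (fun s => u1 s + - u2 s) s (d1 s + - d2 s)).
  { intros s Is. apply DerivWithin_plus; [|apply DerivWithin_opp]; apply Hu, Is. }
  pose proof (DerivWithin_Icc_bound a b ts _ _ K Its Hdiff HK t It) as Hbound.
  cbv beta in Hbound. now rewrite Hts, Rplus_opp_r, Rminus_0_r in Hbound.
Qed.

(* On an interval shorter than [1 / (2 L)] each Picard-type estimate halves the distance. *)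
Lemma SolvesOn_Icc_unique (W h : R -> R) (K : R -> Prop) a b ts L B (q1 p1 q2 p2 : R -> R) :
  Icc a b ts -> 0 <= L -> (b - a) * L <= / 2 ->
  (forall x y, K x -> K y -> Rabs (Derive h x - Derive h y) <= L * Rabs (x - y)) ->
  (forall x y, Rabs (Derive W x - Derive W y) <= L * Rabs (x - y)) ->
  (forall t, Icc a b t -> K (p1 t) /\ K (p2 t)) ->
  (forall t, Icc a b t -> Rabs (q1 t - q2 t) <= B /\ Rabs (p1 t - p2 t) <= B) ->
  SolvesOn W h (Icc a b) q1 p1 -> SolvesOn W h (Icc a b) q2 p2 ->
  q1 ts = q2 ts -> p1 ts = p2 ts ->
  forall t, Icc a b t -> q1 t = q2 t /\ p1 t = p2 t.
Proof.
  intros Its HL HLab Hh HW HK HB Hs1 Hs2 Hq Hp.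
  assert (HB0 : 0 <= B) by (eapply Rle_trans; [apply Rabs_pos|apply (HB ts Its)]).
  assert (Hab : 0 <= b - a) by (destruct Its; lra).
  set (e := fun k => B * (/ 2) ^ k).
  assert (He : forall k, L * e k * (b - a) <= e (S k)).
  { intros k. unfold e. simpl.
    assert (0 <= B * (/ 2) ^ k) by (apply Rmult_le_pos; [exact HB0|apply pow_le; lra]).
    replace (L * (B * (/ 2) ^ k) * (b - a)) with ((b - a) * L * (B * (/ 2) ^ k)) by ring.
    replace (B * (/ 2 * (/ 2) ^ k)) with (/ 2 * (B * (/ 2) ^ k)) by ring.
    now apply Rmult_le_compat_r. }
  assert (Hk : forall k t, Icc a b t -> Rabs (q1 t - q2 t) <= e k /\ Rabs (p1 t - p2 t) <= e k).
  { induction k as [|k IH]; intros t It.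
    - unfold e. rewrite pow_O, Rmult_1_r. apply HB, It.
    - split; (eapply Rle_trans; [|apply He]).
      + apply (Icc_difference_bound a b ts q1 q2
                 (fun s => Derive h (p1 s)) (fun s => Derive h (p2 s)));
          [exact Its|intros s Is; split; [apply Hs1|apply Hs2]; exact Is| |exact Hq|exact It].
        intros s Is. destruct (HK s Is). eapply Rle_trans; [apply Hh; assumption|].
        apply Rmult_le_compat_l; [exact HL|apply IH, Is].
      + apply (Icc_difference_bound a b ts p1 p2
                 (fun s => - Derive W (q1 s)) (fun s => - Derive W (q2 s)));
          [exact Its|intros s Is; split; [apply Hs1|apply Hs2]; exact Is| |exact Hp|exact It].
        intros s Is. replace (- Derive W (q1 s) - - Derive W (q2 s))
          with (- (Derive W (q1 s) - Derive W (q2 s))) by ring.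
        rewrite Rabs_Ropp. eapply Rle_trans; [apply HW|].
        apply Rmult_le_compat_l; [exact HL|apply IH, Is]. }
  intros t It. split; apply Rminus_diag_uniq, Rabs_eq_0, (le_geometric_eq0 _ B);
    try apply Rabs_pos; intros k; apply (Hk k t It).
Qed.

Lemma bounded_on_Icc f a b : a <= b -> (forall x, Icc a b x -> continuity_pt f x) ->
  exists M, forall x, Icc a b x -> Rabs (f x) <= M.
Proof.
  intros Hab Hf.
  destruct (continuity_ab_maj (fun x => Rabs (f x)) a b Hab) as [x [Hx _]].
  - intros c Hc. apply (continuity_pt_comp f Rabs c); [apply Hf, Hc|apply Rcontinuity_abs].
  - exists (Rabs (f x)). exact Hx.
Qed.

Lemma SmoothOn_open_derivatives (U : R -> Prop) f : open U -> SmoothOn U f ->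
  exists D : nat -> R -> R, (forall x, U x -> D O x = f x) /\
    forall k x, U x -> is_derive (D k) x (D (S k) x).
Proof.
  intros HU [D [HD0 HD]]. exists D. split; [exact HD0|]. intros k x Ux.
  destruct (HU x Ux) as [e He].
  apply (DerivWithin_is_derive U _ _ _ e);
    [apply cond_pos|intros s Hs; apply He, Hs|apply HD, Ux].
Qed.

Lemma SolvesOn_ext_loc W h1 h2 I q p :
  (forall t, I t -> locally (p t) (fun y => h1 y = h2 y)) ->
  SolvesOn W h1 I q p -> SolvesOn W h2 I q p.
Proof.
  intros Hh Hs t It. rewrite <- (Derive_ext_loc h1 h2 (p t) (Hh t It)). exact (Hs t It).
Qed.

Section LocalFlow.

Variables (E W : R -> R) (DE : nat -> R -> R) (U : R -> Prop).
Hypothesis U_open : open U.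
Hypothesis DE_0 : forall x, U x -> DE O x = E x.
Hypothesis DE_S : forall k x, U x -> is_derive (DE k) x (DE (S k) x).
Hypothesis W_smooth : Smooth W.
Variables ts ps : R.
Hypothesis U_ps : U ps.

Lemma is_derive_E x : U x -> is_derive E x (DE 1%nat x).
Proof.
  intros Ux. destruct (U_open x Ux) as [e He].
  apply (is_derive_ext_loc (DE O)); [|apply DE_S, Ux].
  exists e. intros y Hy. apply DE_0, He, Hy.
Qed.

Lemma Derive_E x : U x -> Derive E x = DE 1%nat x.
Proof. intros Ux. apply is_derive_unique, is_derive_E, Ux. Qed.

Lemma is_derive_Derive_n_W k x : is_derive (Derive_n W k) x (Derive_n W (S k) x).
Proof. apply Derive_correct. exact (W_smooth (S k) x). Qed.

Lemma SolvesOn_local_existence qs : Derive W qs < 0 ->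
  exists dl Q P, 0 < dl /\ Q ts = qs /\ P ts = ps /\ continuous Q ts /\ continuous P ts /\
    (forall t, Rabs (t - ts) < dl -> U (P t) /\ (ts < t -> ps < P t)) /\
    forall I : R -> Prop, (forall t, I t -> Rabs (t - ts) < dl) ->
      SolvesOn W E I Q P /\ SmoothOn I Q /\ SmoothOn I P.
Proof.
  intros Hforce. destruct (U_open ps U_ps) as [r Hr].
  destruct (hamiltonian_local_solution E (DE 1%nat) W (Derive W) ts ps qs r)
    as (dl & Q & P & Hdl & HQ & HP & Hsol).
  { apply cond_pos. }
  { intros x Hx. apply is_derive_E, Hr, Hx. }
  { intros x. apply (is_derive_Derive_n_W 0). }
  { intros x. apply (is_derive_continuity_pt _ _ _ (is_derive_Derive_n_W 1 x)). }
  { exact Hforce. }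
  assert (HPU : forall t, Rabs (t - ts) < dl -> U (P t)) by (intros t Ht; apply Hr, Hsol, Ht).
  assert (Hts : Rabs (ts - ts) < dl) by (rewrite Rminus_eq_0, Rabs_R0; exact Hdl).
  exists dl, Q, P. do 3 (split; [assumption|]).
  split; [apply (ex_derive_continuous Q); eexists; apply Hsol, Hts|].
  split; [apply (ex_derive_continuous P); eexists; apply Hsol, Hts|].
  split; [intros t Ht; split; [apply HPU, Ht|apply Hsol, Ht]|].
  intros I HI.
  assert (Hs : SolvesOn W E I Q P).
  { intros t It. rewrite Derive_E by apply HPU, HI, It.
    split; apply is_derive_DerivWithin, Hsol, HI, It. }
  split; [exact Hs|].
  apply (SmoothOn_flow I (fun j => DE (S j)) (fun j x => - Derive_n W (S j) x)).
  - intros t It. rewrite <- Derive_E by apply HPU, HI, It. apply Hs, It.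
  - intros j t It. apply DE_S, HPU, HI, It.
  - intros j t It. exact (is_derive_opp _ _ _ (is_derive_Derive_n_W (S j) (Q t))).
Qed.

Lemma Derive_E_bounded_lipschitz : exists r L M, 0 < r /\ 0 <= L /\
  (forall x, Icc (ps - r) (ps + r) x -> U x /\ Rabs (Derive E x) <= M) /\
  forall x y, Icc (ps - r) (ps + r) x -> Icc (ps - r) (ps + r) y ->
    Rabs (Derive E x - Derive E y) <= L * Rabs (x - y).
Proof.
  destruct (U_open ps U_ps) as [e He].
  set (r := e / 2). assert (Hr : 0 < r) by (unfold r; pose proof (cond_pos e); lra).
  assert (HU : forall x, Icc (ps - r) (ps + r) x -> U x).
  { intros x [Hx1 Hx2]. apply He. change (Rabs (x - ps) < e). unfold r in *. split_Rabs; lra. }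
  assert (Hbd : forall k, exists M, forall x, Icc (ps - r) (ps + r) x -> Rabs (DE k x) <= M).
  { intros k. apply bounded_on_Icc; [lra|].
    intros x Hx. exact (is_derive_continuity_pt _ _ _ (DE_S k x (HU x Hx))). }
  destruct (Hbd 1%nat) as [M HM]. destruct (Hbd 2%nat) as [L HL].
  exists r, L, M. split; [exact Hr|]. split.
  { eapply Rle_trans; [apply Rabs_pos|apply (HL ps)]. unfold Icc; lra. }
  split; [intros x Hx; rewrite Derive_E by apply HU, Hx; split; [apply HU|apply HM]; exact Hx|].
  intros x y Hx Hy. rewrite !Derive_E by (apply HU; assumption).
  apply (is_derive_Icc_lipschitz (ps - r) (ps + r) (DE 1%nat) (DE 2%nat) L);
    [|exact HL|exact Hy|exact Hx].
  intros z Hz. apply DE_S, HU, Hz.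
Qed.

Lemma SolvesOn_local_uniqueness :
  (exists C, forall x, Rabs (Derive_n W 1 x) <= C) ->
  (exists C, forall x, Rabs (Derive_n W 2 x) <= C) ->
  exists d0, 0 < d0 /\ forall d (q1 p1 q2 p2 : R -> R), 0 < d <= d0 ->
    SolvesOn W E (Icc (ts - d) (ts + d)) q1 p1 -> SolvesOn W E (Icc (ts - d) (ts + d)) q2 p2 ->
    q1 ts = q2 ts -> p1 ts = ps -> p2 ts = ps ->
    forall t, Icc (ts - d) (ts + d) t -> q1 t = q2 t /\ p1 t = p2 t.
Proof.
  intros [C1 HC1] [C2 HC2].
  destruct Derive_E_bounded_lipschitz as (r & L & M & Hr & HL & HEM & HElip).
  assert (HC1p : 0 <= C1) by (eapply Rle_trans; [apply Rabs_pos|apply (HC1 0)]).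
  assert (HC2p : 0 <= C2) by (eapply Rle_trans; [apply Rabs_pos|apply (HC2 0)]).
  assert (HMp : 0 <= M) by (eapply Rle_trans; [apply Rabs_pos|apply (HEM ps)]; unfold Icc; lra).
  exists (Rmin (r / (2 * (C1 + 1))) (/ (4 * (L + C2 + 1)))).
  split; [apply Rmin_pos; [apply Rdiv_lt_0_compat|apply Rinv_0_lt_compat]; lra|].
  intros d q1 p1 q2 p2 [Hd Hdd0] Hs1 Hs2 Hq Hp1 Hp2.
  pose proof (Rmin_l (r / (2 * (C1 + 1))) (/ (4 * (L + C2 + 1)))) as Hd1.
  pose proof (Rmin_r (r / (2 * (C1 + 1))) (/ (4 * (L + C2 + 1)))) as Hd2.
  assert (HCd : C1 * (ts + d - (ts - d)) <= r).
  { apply Rmult_le_compat_l with (r := 2 * (C1 + 1)) in Hd1; [|lra].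
    replace (2 * (C1 + 1) * (r / (2 * (C1 + 1)))) with r in Hd1 by (field; lra). nra. }
  assert (HLd : (ts + d - (ts - d)) * (L + C2) <= / 2).
  { apply Rmult_le_compat_l with (r := 4 * (L + C2 + 1)) in Hd2; [|lra].
    rewrite Rinv_r in Hd2 by lra. nra. }
  assert (Its : Icc (ts - d) (ts + d) ts) by (unfold Icc; lra).
  pose proof (SolvesOn_Icc_confined W E _ _ ts q1 p1 C1 M r Its Hs1 HC1 HCd) as Hc1.
  pose proof (SolvesOn_Icc_confined W E _ _ ts q2 p2 C1 M r Its Hs2 HC1 HCd) as Hc2.
  rewrite Hp1 in Hc1. rewrite Hp2 in Hc2.
  specialize (Hc1 (fun x Hx => proj2 (HEM x Hx))).
  specialize (Hc2 (fun x Hx => proj2 (HEM x Hx))).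
  apply (SolvesOn_Icc_unique W E (Icc (ps - r) (ps + r)) _ _ ts (L + C2)
           (2 * (M * (ts + d - (ts - d))) + 2 * r)); try assumption; [lra| | | | |congruence].
  - intros x y Hx Hy. eapply Rle_trans; [apply HElip; assumption|].
    apply Rmult_le_compat_r; [apply Rabs_pos|lra].
  - intros x y. eapply Rle_trans.
    + apply (lipschitz_of_bounded_derive (Derive W) (Derive_n W 2) C2);
        [apply (is_derive_Derive_n_W 1)|exact HC2].
    + apply Rmult_le_compat_r; [apply Rabs_pos|lra].
  - intros t It. split; [apply Hc1|apply Hc2]; exact It.
  - intros t It.
    destruct (Hc1 t It) as [[Hp1t1 Hp1t2] Hq1t], (Hc2 t It) as [[Hp2t1 Hp2t2] Hq2t].
    assert (0 <= M * (ts + d - (ts - d))) by (apply Rmult_le_pos; lra).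
    rewrite Hq in Hq1t. split; split_Rabs; lra.
Qed.

End LocalFlow.

Lemma BandGap_pos V n (U : R -> Prop) ps
  (HA1b : forall p, U p -> p <> ps -> BlochBand V n p <> BlochBand V (S n) p)
  (HA2 : exists M, 0 < M /\ forall p, closureR U p -> forall m, (1 <= m)%nat ->
           m <> n -> m <> S n ->
           Rabs (BlochBand V m p - BlochBand V (S n) p) >= M /\
           Rabs (BlochBand V n p - BlochBand V m p) >= M)
  p : U p -> p <> ps -> BandGap V n p > 0.
Proof.
  intros Up Hps. destruct HA2 as [M [HM HA2]].
  assert (Hcl : closureR U p).
  { intros e He. exists p. split; [exact Up|]. now rewrite Rminus_eq_0, Rabs_R0. }
  set (g := Rabs (BlochBand V n p - BlochBand V (S n) p)).
  assert (Hg : 0 < g).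
  { apply Rabs_pos_lt. intros E. apply (HA1b p Up Hps). lra. }
  unfold BandGap.
  set (gaps := fun x => exists m', (1 <= m')%nat /\ m' <> n /\
                 x = Rabs (BlochBand V n p - BlochBand V m' p)).
  destruct (Glb_Rbar_correct gaps) as [Hlb Hglb].
  assert (Hlow : Rbar_le (Rmin g M) (Glb_Rbar gaps)).
  { apply Hglb. intros x (m' & Hm'1 & Hm'n & ->). simpl.
    destruct (Nat.eq_dec m' (S n)) as [->|Hm'Sn]; [apply Rmin_l|].
    pose proof (Rmin_r g M). destruct (HA2 p Hcl m' Hm'1 Hm'n Hm'Sn). lra. }
  assert (Hup : Rbar_le (Glb_Rbar gaps) g).
  { apply Hlb. exists (S n). repeat split; [apply le_n_S, le_0_n|apply not_eq_sym, n_Sn]. }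
  pose proof (Rmin_pos g M Hg HM).
  destruct (Glb_Rbar gaps); simpl in *; [lra|contradiction|contradiction].
Qed.

Lemma BandEminus_right V n ps x : ps < x ->
  locally x (fun y => BandEminus V n ps y = BlochBand V n y).
Proof.
  intros Hx. exists (mkposreal (x - ps) ltac:(lra)). intros y Hy.
  change (Rabs (y - x) < x - ps) in Hy. unfold BandEminus.
  destruct (Rlt_dec y ps); [split_Rabs; lra|reflexivity].
Qed.

Theorem proposition3p15
  (V W : R -> R)
  (HVsmooth : Smooth V) (HVper : Periodic1 V)
  (HWsmooth : Smooth W)
  (HWbdd : forall k : nat, exists C, forall x, Rabs (Derive_n W k x) <= C)
  (n : nat) (Hn : (1 <= n)%nat)
  (U : R -> Prop) (pstar : R)
  (HUopen : open U) (HUB : forall p, U p -> 0 <= p <= 2 * PI) (HUpstar : U pstar)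
  (* (A1) *)
  (HA1a : BlochBand V n pstar = BlochBand V (S n) pstar)
  (HA1b : forall p, U p -> p <> pstar -> BlochBand V n p <> BlochBand V (S n) p)
  (* (A2) *)
  (HA2 : exists M, 0 < M /\ forall p, closureR U p -> forall m, (1 <= m)%nat ->
           m <> n -> m <> S n ->
           Rabs (BlochBand V m p - BlochBand V (S n) p) >= M /\
           Rabs (BlochBand V n p - BlochBand V m p) >= M)
  (* (A3): smooth band functions E_+, E_- and smooth normalized eigenfunctions
     chi_+ = ap + i bp, chi_- = am + i bm (first argument p, second z) *)
  (HA3E : SmoothOn U (BandEplus V n pstar) /\ SmoothOn U (BandEminus V n pstar))
  (HA3chi : exists ap bp am bm : R -> R -> R,
     (forall p, U p ->
        BlochEigenfunction V p (BandEplus V n pstar p) (ap p) (bp p) /\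
        Normalized (ap p) (bp p) /\
        BlochEigenfunction V p (BandEminus V n pstar p) (am p) (bm p) /\
        Normalized (am p) (bm p)) /\
     (forall z, SmoothOn U (fun p => ap p z) /\ SmoothOn U (fun p => bp p z) /\
                SmoothOn U (fun p => am p z) /\ SmoothOn U (fun p => bm p z)))
  (* (A4) *)
  (HA4 : Derive (BandEplus V n pstar) pstar > 0 /\ 0 > Derive (BandEminus V n pstar) pstar)
  (* Band Crossing Scenario *)
  (q0 p0 tstar qstar : R) (q p : R -> R)
  (Htstar : 0 < tstar)
  (Hgap0 : BandGap V n p0 > 0)
  (Hq0 : q 0 = q0) (Hp0 : p 0 = p0)
  (Hqsm : SmoothOn (Ico 0 tstar) q) (Hpsm : SmoothOn (Ico 0 tstar) p)
  (Hsol : SolvesOn W (BlochBand V n) (Ico 0 tstar) q p)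
  (Huniq : forall q' p' : R -> R,
     SmoothOn (Ico 0 tstar) q' -> SmoothOn (Ico 0 tstar) p' ->
     SolvesOn W (BlochBand V n) (Ico 0 tstar) q' p' ->
     q' 0 = q0 -> p' 0 = p0 ->
     forall t, Ico 0 tstar t -> q' t = q t /\ p' t = p t)
  (Hgap : forall t, Ico 0 tstar t -> BandGap V n (p t) > 0)
  (Hplim : filterlim p (at_left tstar) (locally pstar))
  (Hqlim : filterlim q (at_left tstar) (locally qstar))
  (Hforce : - Derive W qstar > 0) :
  exists d0, 0 < d0 /\
  forall d, 0 < d <= d0 ->
  exists qm pm : R -> R,
    (* (i) *)
    (SmoothOn (Icc (tstar - d) (tstar + d)) qm /\
     SmoothOn (Icc (tstar - d) (tstar + d)) pm /\
     SolvesOn W (BandEminus V n pstar) (Icc (tstar - d) (tstar + d)) qm pm /\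
     (forall t, Icc (tstar - d) (tstar + d) t -> U (pm t)) /\
     qm tstar = qstar /\ pm tstar = pstar /\
     (forall q' p' : R -> R,
        SmoothOn (Icc (tstar - d) (tstar + d)) q' ->
        SmoothOn (Icc (tstar - d) (tstar + d)) p' ->
        SolvesOn W (BandEminus V n pstar) (Icc (tstar - d) (tstar + d)) q' p' ->
        (forall t, Icc (tstar - d) (tstar + d) t -> U (p' t)) ->
        q' tstar = qstar -> p' tstar = pstar ->
        forall t, Icc (tstar - d) (tstar + d) t -> q' t = qm t /\ p' t = pm t)) /\
    (* (ii) and (iii) *)
    (exists T0, tstar + d < T0 /\
     forall T', tstar + d <= T' <= T0 ->
     exists qn pn : R -> R,
       SolvesOn W (BlochBand V n) (Ioc tstar T') qn pn /\
       (forall t, Ioc tstar T' t -> 0 <= pn t <= 2 * PI) /\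
       filterlim qn (at_right tstar) (locally qstar) /\
       filterlim pn (at_right tstar) (locally pstar) /\
       (forall t, Ioc tstar T' t -> BandGap V n (pn t) > 0) /\
       (forall t, Ioc tstar (tstar + d) t -> qm t = qn t /\ pm t = pn t) /\
       SmoothOn (Icc (tstar - d) T')
         (fun t => if Rle_dec t (tstar + d) then qm t else qn t) /\
       SmoothOn (Icc (tstar - d) T')
         (fun t => if Rle_dec t (tstar + d) then pm t else pn t)).
Proof.
  (* Only (A1)-(A3), the bounds on [W] and [- W'(qstar) > 0] are used: the conclusions
     concern the limit point alone, not the trajectory before [tstar], and not (A4). *)
  set (E := BandEminus V n pstar).
  destruct (SmoothOn_open_derivatives U E HUopen (proj2 HA3E)) as (DE & HDE0 & HDE).
  destruct (SolvesOn_local_existence E W DE U HUopen HDE0 HDE HWsmooth tstar pstar HUpstar qstar)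
    as (dl & Q & P & Hdl & HQ & HP & HQc & HPc & HPU & Hflow); [lra|].
  destruct (SolvesOn_local_uniqueness E W DE U HUopen HDE0 HDE HWsmooth tstar pstar HUpstar
              (HWbdd 1%nat) (HWbdd 2%nat)) as (du & Hdu & Hunique).
  exists (Rmin du (dl / 4)). split; [apply Rmin_pos; lra|]. intros d [Hd Hdmin].
  pose proof (Rmin_l du (dl / 4)). pose proof (Rmin_r du (dl / 4)).
  exists Q, P. split.
  - destruct (Hflow (Icc (tstar - d) (tstar + d))) as (HS & HSQ & HSP);
      [intros t [H1 H2]; split_Rabs; lra|].
    do 3 (split; [assumption|]). split; [intros t [H1 H2]; apply HPU; split_Rabs; lra|].
    do 2 (split; [assumption|]).
    intros q' p' _ _ Hs' _ Hq' Hp' t It.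
    apply (Hunique d q' p' Q P); auto; [lra|congruence].
  - exists (tstar + dl / 2). split; [lra|]. intros T' HT'. exists Q, P.
    assert (HIoc : forall t, Ioc tstar T' t -> Rabs (t - tstar) < dl /\ tstar < t)
      by (intros t [H1 H2]; split; [split_Rabs|]; lra).
    split.
    { apply (SolvesOn_ext_loc W E); [|apply Hflow; intros t It; apply HIoc, It].
      intros t It. apply BandEminus_right, HPU; apply HIoc, It. }
    split; [intros t It; apply HUB, HPU, HIoc, It|].
    split; [rewrite <- HQ; exact (filterlim_filter_le_1 _ (filter_le_within _) HQc)|].
    split; [rewrite <- HP; exact (filterlim_filter_le_1 _ (filter_le_within _) HPc)|].
    split.
    { intros t It. destruct (HPU t (proj1 (HIoc t It))) as [HUt HPt].
      apply (BandGap_pos V n U pstar HA1b HA2 _ HUt). apply Rgt_not_eq, HPt, HIoc, It. }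
    split; [intros t _; split; reflexivity|].
    destruct (Hflow (Icc (tstar - d) T')) as (_ & HSQ & HSP);
      [intros t [H1 H2]; split_Rabs; lra|].
    split; [apply (SmoothOn_ext _ Q)|apply (SmoothOn_ext _ P)]; try assumption;
      intros t; now destruct Rle_dec.
Qed.
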